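(* Let $G$ be a finite bipartite graph and let $H$ be a $2$-lift of $G$. Then for every $k\geq0$, $$m_k(G\cup G)\geq m_k(H),$$ where $G\cup G$ is the disjoint union of two copies of $G$. In particular, for every $t\geq0$, $M(G,t)^2\geq M(H,t)$.
   Context: $m_k(\cdot)$ denotes the number of matchings of size $k$ and $M(G,t)=\sum_k m_k(G)t^k$. A graph $H$ is a $2$-lift of $G$ if $V(H)=V(G)\times\{0,1\}$ and for every edge $(u,v)\in E(G)$ exactly one of the following holds: $((u,0),(v,0))$ and $((u,1),(v,1))$ are edges of $H$, or $((u,0),(v,1))$ and $((u,1),(v,0))$ are edges of $H$; and if $(u,v)\notin E(G)$ then none of these four pairs is an edge of $H$. *)

From mathcomp Require Import all_boot all_order all_algebra.
Set Implicit Arguments. Unset Strict Implicit. Unset Printing Implicit Defensive.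
Import Order.TTheory GRing.Theory Num.Theory.

Definition simple_graph (V : finType) (r : rel V) : Prop :=
  (forall x y, r x y = r y x) /\ (forall x, ~~ r x x).

Definition bipartite (V : finType) (r : rel V) : Prop :=
  exists c : V -> bool, forall x y, r x y -> c x != c y.

Definition is_edge (V : finType) (r : rel V) (E : {set V}) : bool :=
  [exists x, exists y, [&& x != y, r x y & E == [set x; y]]].

Definition matching (V : finType) (r : rel V) (M : {set {set V}}) : bool :=
  [forall E in M, is_edge r E] &&
  [forall E1 in M, forall E2 in M, (E1 != E2) ==> [disjoint E1 & E2]].

Definition mk (V : finType) (r : rel V) (k : nat) : nat :=
  #|[set M : {set {set V}} | matching r M && (#|M| == k)]|.

(* Matching generating polynomial M(G,t) = sum_k m_k(G) t^k (m_k = 0 for k > |V|). *)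
Definition matchpoly (R : numDomainType) (V : finType) (r : rel V) (t : R) : R :=
  (\sum_(k < #|V|.+1) (mk r k)%:R * t ^+ k)%R.

Definition dunion (V : finType) (r : rel V) : rel (V * bool) :=
  fun x y => r x.1 y.1 && (x.2 == y.2).

(* H is a 2-lift of G (vertex set V × {0,1}, with false = 0 and true = 1). *)
Definition two_lift (V : finType) (r : rel V) (h : rel (V * bool)) : Prop :=
  forall u v : V,
    let h00 := h (u, false) (v, false) in
    let h11 := h (u, true) (v, true) in
    let h01 := h (u, false) (v, true) in
    let h10 := h (u, true) (v, false) in
    if r u v then
      ([&& h00, h11, ~~ h01 & ~~ h10] || [&& h01, h10, ~~ h00 & ~~ h11])
    else [&& ~~ h00, ~~ h11, ~~ h01 & ~~ h10].

(* A matching M of the 2-lift H is switched, at a set of vertices u of G,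
   by exchanging the copies (u, false) and (u, true).  The projection of M
   to G covers each vertex at most twice, and one can choose the switch so
   that every edge of M ends up inside a single layer, i.e. becomes an edge
   of G ∪ G: first switch so that every edge of M crosses the two layers
   (by induction, contracting the two edges of M through a fiber into one;
   consistency around cycles comes for free because such a cycle uses both
   copies of each of its vertices), then switch along a proper 2-colouring
   of the bipartite graph G.  The switch is chosen from the projection of M
   alone, which switching does not change, so the map is injective and
   m_k(H) <= m_k(G ∪ G).  A matching of G ∪ G is a pair of matchings of G,
   hence M(G ∪ G, t) <= M(G, t)^2 for t >= 0. *)

From mathcomp Require Import all_boot all_order all_algebra.
Import Order.TTheory GRing.Theory Num.Theory.

Set Implicit Arguments.
Unset Strict Implicit.
Unset Printing Implicit Defensive.

Section Matchings.

Variables (U : finType) (r : rel U).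

Lemma edgeP (E : {set U}) :
  is_edge r E -> exists x y, [/\ x != y, r x y & E = [set x; y]].
Proof. by case/existsP=> x /existsP[y /and3P[xy rxy /eqP->]]; exists x, y. Qed.

Lemma edge_set2 (x y : U) : x != y -> r x y -> is_edge r [set x; y].
Proof. by move=> xy rxy; apply/existsP; exists x; apply/existsP; exists y; rewrite xy rxy eqxx. Qed.

Lemma matchingP (M : {set {set U}}) :
  reflect ({in M, forall E : {set U}, is_edge r E} /\
           {in M &, forall E1 E2 : {set U}, E1 != E2 -> [disjoint E1 & E2]})
          (matching r M).
Proof.
apply: (iffP andP) => [[/forall_inP edgeM /forall_inP disjM]|[edgeM disjM]].
  split=> // E1 E2 /disjM/forall_inP dE1 /dE1; exact/implyP.
split; apply/forall_inP => // E1 E1M; apply/forall_inP => E2 E2M.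
exact/implyP/disjM.
Qed.

Lemma matching_edge (M : {set {set U}}) E : matching r M -> E \in M -> is_edge r E.
Proof. by case/matchingP=> edgeM _; apply: edgeM. Qed.

Lemma matching_disjoint (M : {set {set U}}) E1 E2 :
  matching r M -> E1 \in M -> E2 \in M -> E1 != E2 -> [disjoint E1 & E2].
Proof. by case/matchingP=> _; apply. Qed.

Lemma matching_notin (M : {set {set U}}) E1 E2 x :
  matching r M -> E1 \in M -> E2 \in M -> E1 != E2 -> x \in E1 -> x \notin E2.
Proof. by move=> mM E1M E2M E12 xE1; rewrite (disjointFr (matching_disjoint mM E1M E2M E12)). Qed.

Lemma edge_rel (E : {set U}) x y :
  symmetric r -> is_edge r E -> x \in E -> y \in E -> x != y -> r x y.
Proof.
move=> rC /edgeP[p [q [_ rpq ->]]]; rewrite !inE.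
by case/orP=> /eqP-> /orP[]/eqP->; rewrite ?eqxx // rC.
Qed.

Lemma matching_subset (M N : {set {set U}}) :
  N \subset M -> matching r M -> matching r N.
Proof.
move=> /subsetP NM /matchingP[edgeM disjM]; apply/matchingP; split.
  by move=> E /NM; apply: edgeM.
by move=> E1 E2 /NM E1M /NM E2M; apply: disjM.
Qed.

Lemma edge_other (E : {set U}) x :
  is_edge r E -> x \in E -> exists2 z, z != x & E = [set x; z].
Proof.
case/edgeP=> p [q [pq _ ->]]; rewrite !inE => /orP[]/eqP->.
  by exists q; rewrite // eq_sym.
by exists p; rewrite // setUC.
Qed.

Lemma matching_setU1 (M : {set {set U}}) E :
  matching r M -> is_edge r E -> {in M, forall E0 : {set U}, [disjoint E & E0]} ->
  matching r (E |: M).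
Proof.
move=> /matchingP[edgeM disjM] edgeE disjE; apply/matchingP; split.
  by move=> E0; rewrite in_setU1 => /orP[/eqP->|/edgeM].
move=> E1 E2; rewrite !in_setU1 => /orP[/eqP->|E1M] /orP[/eqP->|E2M]; rewrite ?eqxx //.
- by move=> _; apply: disjE.
- by move=> _; rewrite disjoint_sym; apply: disjE.
- exact: disjM.
Qed.

Lemma matching_merge (M : {set {set U}}) E1 E2 x y :
    matching r M -> E1 \in M -> E2 \in M -> E1 != E2 -> x \in E1 -> y \in E2 -> r x y ->
  matching r ([set x; y] |: (M :\ E1 :\ E2)) /\ #|[set x; y] |: (M :\ E1 :\ E2)| < #|M|.
Proof.
move=> mM E1M E2M E12 xE1 yE2 rxy; split; last first.
  have E21 : E2 != E1 by rewrite eq_sym.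
  rewrite cardsU1 (cardsD1 E1 M) E1M (cardsD1 E2 (M :\ E1)) !inE E21 E2M /=.
  by rewrite add1n ltnS leq_add2r leq_b1.
have xy : x != y by apply: contraTneq yE2 => <-; apply: matching_notin mM E1M E2M E12 xE1.
apply: matching_setU1; [|exact: edge_set2|].
  exact: matching_subset (subset_trans (subsetDl _ _) (subsetDl _ _)) mM.
move=> E0; rewrite !inE => /and3P[E0E2 E0E1 E0M].
apply/pred0P => w /=; rewrite !inE; apply/negbTE/andP => -[/orP[]/eqP-> ]; apply/negP.
  by apply: (matching_notin mM E1M E0M) xE1; rewrite eq_sym.
by apply: (matching_notin mM E2M E0M) yE2; rewrite eq_sym.
Qed.

Lemma card_matching_le (M : {set {set U}}) : matching r M -> #|M| <= #|U|.
Proof.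
move=> /matchingP[edgeM disjM].
have /eqP coverM : trivIset M by apply/trivIsetP.
rewrite -sum1_card (leq_trans _ (max_card (mem (cover M)))) // -coverM.
apply: leq_sum => E /edgeM/edgeP[x [y [_ _ ->]]].
by rewrite card_gt0; apply/set0Pn; exists x; rewrite !inE eqxx.
Qed.

Lemma matchpolyE (R : numDomainType) (t : R) :
  matchpoly r t = (\sum_(M | matching r M) t ^+ #|M|)%R.
Proof.
rewrite /matchpoly (partition_big (fun M : {set {set U}} => inord #|M| : 'I_#|U|.+1) xpredT) //=.
apply: eq_bigr => k _; rewrite (eq_bigr (fun=> t ^+ k)%R); last first.
  by move=> M /andP[mM /eqP <-]; rewrite inordK // ltnS (card_matching_le mM).
rewrite sumr_const /mk mulr_natl; congr (_ *+ _)%R; apply: eq_card => M.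
rewrite inE unfold_in /=; case mM: (matching r M) => //=.
have := card_matching_le mM; rewrite -ltnS => ltM.
by apply/eqP/eqP => [e|<-]; [apply: val_inj; rewrite /= inordK | rewrite inordK].
Qed.

End Matchings.

Lemma matching_subrel (U : finType) (r r' : rel U) (M : {set {set U}}) :
  subrel r r' -> matching r M -> matching r' M.
Proof.
move=> rr' /matchingP[edgeM disjM]; apply/matchingP; split=> // E /edgeM/edgeP[x [y [xy rxy ->]]].
exact/edge_set2/rr'.
Qed.

Lemma ler_sum_inj (R : numDomainType) (I J : finType) (P : pred I) (Q : pred J)
    (f : I -> J) (F : J -> R) :
    {in P &, injective f} -> {in P, forall i, Q (f i)} -> (forall j, Q j -> 0 <= F j)%R ->
  (\sum_(i | P i) F (f i) <= \sum_(j | Q j) F j)%R.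
Proof.
move=> f_inj PQ F_ge0; rewrite -(big_imset _ f_inj) (bigID [in f @: P] Q) /=.
rewrite -[X in (X <= _)%R]addr0 lerD ?sumr_ge0 //; last by move=> j /andP[/F_ge0].
rewrite le_eqVlt; apply/orP; left; apply/eqP/eq_bigl => j.
by case: (boolP (j \in f @: P)) => [/imsetP[i Pi ->]|]; rewrite ?andbF ?PQ.
Qed.

Section Switching.

Variable V : finType.
Implicit Types (s : V -> bool) (w x y z : V * bool) (E : {set V * bool}).

Definition level s w := w.2 (+) s w.1.

Definition switch s w := (w.1, level s w).

Definition crosses s E :=
  {in E &, forall x y, x != y -> level s x != level s y}.

Lemma switchK s : involutive (switch s).
Proof. by case=> u a; rewrite /switch /level /= addbK. Qed.

Lemma switch_inj s : injective (switch s).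
Proof. exact: inv_inj (switchK s). Qed.

Lemma crosses_set2 s x y : level s x != level s y -> crosses s [set x; y].
Proof.
move=> xy p q; rewrite !inE => /orP[]/eqP-> /orP[]/eqP->; rewrite ?eqxx // => _.
by rewrite eq_sym.
Qed.

Lemma crosses_fiber s u a : crosses s [set (u, a); (u, ~~ a)].
Proof. by apply: crosses_set2; rewrite /level /=; case: a; case: (s u). Qed.

Lemma crosses_update s u b E :
  {in E, forall w, w.1 != u} -> crosses s E -> crosses [eta s with u |-> b] E.
Proof.
move=> Eu sE x y xE yE; rewrite /level /= (negbTE (Eu x xE)) (negbTE (Eu y yE)).
exact: sE.
Qed.

Lemma fiber_neq w u a : w != (u, a) -> w != (u, ~~ a) -> w.1 != u.
Proof. by case: w => v b /=; case: (eqVneq v u) => // ->; case: a; case: b; rewrite ?eqxx. Qed.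

Lemma level_update_at s u b c : level [eta s with u |-> b] (u, c) = c (+) b.
Proof. by rewrite /level /= eqxx. Qed.

Lemma level_update_off s u b w : w.1 != u -> level [eta s with u |-> b] w = level s w.
Proof. by move=> wu; rewrite /level /= (negbTE wu). Qed.

Local Notation disjoint_pairs M := (matching (fun _ _ => true) M).

(* When the edge [E] of [M] joins [(u, a)] to a vertex [y] outside the fiber
   of [u], merge [E] with the edge through [(u, ~~ a)], if any, into the edge
   from [y] to its other end; a crossing switch for the smaller family [N]
   then extends to the edges of [M] through [(u, ~~ a)] by resetting it at [u]. *)
Lemma disjoint_pairs_contract (M : {set {set V * bool}}) E u a y :
    disjoint_pairs M -> E \in M -> E = [set (u, a); y] -> y.1 != u ->
  exists N, [/\ disjoint_pairs N, #|N| < #|M|,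
    {in M, forall E0, E0 != E -> (u, ~~ a) \notin E0 -> E0 \in N} &
    forall s, {in N, forall E0, crosses s E0} ->
    {in M, forall E0, E0 != E -> (u, ~~ a) \in E0 ->
      crosses [eta s with u |-> a (+) ~~ level s y] E0}].
Proof.
move=> mM EM defE yu; set x' := (u, ~~ a).
have ltME : #|M :\ E| < #|M| by rewrite (cardsD1 E M) EM.
case: (pickP [pred E2 in M | x' \in E2]) => [E2 /andP[E2M x'E2] | noE2]; last first.
  exists (M :\ E); split=> //; first exact: matching_subset (subsetDl _ _) mM.
    by move=> E0 E0M E0E _; rewrite !inE E0E.
  by move=> s _ E0 E0M _; have := noE2 E0; rewrite inE E0M /= => ->.
have yE : y \in E by rewrite defE !inE eqxx orbT.
have x'E : x' \notin E.
  rewrite defE !inE negb_or; apply/andP; split.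
    by rewrite xpair_eqE negb_and; case: (a); rewrite orbT.
  by apply: contra_neq yu => <-.
have E2E : E2 != E by apply: contraNneq x'E => <-.
have [z zx' defE2] := edge_other (matching_edge mM E2M) x'E2.
have zE2 : z \in E2 by rewrite defE2 !inE eqxx orbT.
have zE := matching_notin mM E2M EM E2E zE2.
have zu : z.1 != u.
  by apply: (fiber_neq (a := a)) => //; apply: contraNneq zE => ->; rewrite defE setU11.
have EE2 : E != E2 by rewrite eq_sym.
have yz : y != z by apply: contraNneq zE => <-.
have [mN ltNM] := matching_merge mM EM E2M EE2 yE zE2 (isT : true).
exists ([set y; z] |: (M :\ E :\ E2)); split=> //.
- move=> E0 E0M E0E x'E0; rewrite !inE E0E E0M !andbT; apply/orP; right.
  by apply: contraNneq x'E0 => ->.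
- move=> s sN E0 E0M E0E x'E0.
  have -> : E0 = E2.
    apply/eqP; apply: contraTT x'E0 => E0E2.
    by apply: matching_notin mM E2M E0M _ x'E2; rewrite eq_sym.
  rewrite defE2; apply: crosses_set2.
  rewrite level_update_at level_update_off // addbA addNb addbb /= negbK.
  by apply: (sN [set y; z]); rewrite ?setU11 // !inE eqxx ?orbT.
Qed.

Lemma crossing_switch_exists (M : {set {set V * bool}}) :
  disjoint_pairs M -> exists s, {in M, forall E, crosses s E}.
Proof.
have [n ltMn] := ubnP #|M|; elim: n M ltMn => // n IH M ltMn mM.
have [-> | [E EM]] := set_0Vmem M; first by exists (fun=> false) => E; rewrite inE.
have [[u a] [y [yx _ defE]]] := edgeP (matching_edge mM EM).
case: (eqVneq y.1 u) => [yu | yu].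
  have ltME : #|M :\ E| < n by rewrite (cardsD1 E M) EM in ltMn.
  have [s sME] := IH _ ltME (matching_subset (subsetDl _ _) mM).
  exists s => E0 E0M; case: (eqVneq E0 E) => [-> | E0E]; last by apply: sME; rewrite !inE E0E.
  rewrite defE; case: y yx yu {defE} => v b /= yx vu; subst v.
  have -> : b = ~~ a by move: yx; case: a; case: b; rewrite ?eqxx.
  exact: crosses_fiber.
have [N [mN ltNM MN fiberN]] := disjoint_pairs_contract mM EM defE yu.
have [s sN] := IH N (leq_trans ltNM ltMn) mN.
exists [eta s with u |-> a (+) ~~ level s y] => E0 E0M.
case: (eqVneq E0 E) => [-> | E0E].
  rewrite defE; apply: crosses_set2.
  by rewrite level_update_at level_update_off // addbA addbb; case: (level s y).
case: (boolP ((u, ~~ a) \in E0)) => [x'E0 | x'E0]; first exact: fiberN.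
apply: crosses_update; last exact/sN/MN.
move=> w wE0; apply: (fiber_neq (a := a)); last by apply: contraNneq x'E0 => <-.
by apply: contraNneq (matching_notin mM E0M EM E0E wE0) => ->; rewrite defE setU11.
Qed.

End Switching.

Section TwoLift.

Variables (V : finType) (g : rel V) (h : rel (V * bool)).
Implicit Types (M : {set {set V * bool}}) (E : {set V * bool}).

Definition proj E : {set V} := [set w.1 | w in E].

(* [h (u, false) (v, true)] tells whether the lift of the edge [{u, v}] of G
   crosses the two layers. *)
Definition straightens (P : {set {set V}}) (s : {ffun V -> bool}) :=
  [forall F in P, forall u in F, forall v in F,
     (u != v) ==> (s u (+) s v == h (u, false) (v, true))].

(* A switch chosen from the shadow [proj @: M] of [M] alone, so that it is
   unchanged when [M] is replaced by its switched copy. *)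
Definition straightener M : {ffun V -> bool} :=
  odflt [ffun=> false] [pick s | straightens (proj @: M) s].

Definition straighten M := [set switch (straightener M) @: E | E : {set V * bool} in M].

Lemma proj_switch (s : V -> bool) E : proj (switch s @: E) = proj E.
Proof. by rewrite /proj -imset_comp. Qed.

Lemma straightener_straighten M : straightener (straighten M) = straightener M.
Proof. by rewrite /straightener /straighten -imset_comp (eq_imset _ (proj_switch _)). Qed.

Lemma straightenK M :
  [set switch (straightener M) @: E | E : {set V * bool} in straighten M] = M.
Proof.
rewrite -imset_comp -[RHS]imset_id; apply: eq_imset => E /=.
by rewrite -imset_comp -[RHS]imset_id; apply: eq_imset => w; apply: switchK.
Qed.

Lemma straighten_inj : injective straighten.
Proof.
move=> M1 M2 eqM; rewrite -(straightenK M1) -(straightenK M2).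
by rewrite -(straightener_straighten M1) -(straightener_straighten M2) eqM.
Qed.

Lemma card_straighten M : #|straighten M| = #|M|.
Proof. by apply: card_imset; apply: imset_inj; apply: switch_inj. Qed.

Hypothesis h_lift : two_lift g h.

Lemma lift_edge_proj x y : h x y -> g x.1 y.1.
Proof.
case: x y => u a [v b] /=; move: (h_lift u v) => /=.
case: (g u v) => //; case: a; case: b => /=;
by case: (h (u, false) (v, false)); case: (h (u, true) (v, true));
   case: (h (u, false) (v, true)); case: (h (u, true) (v, false)).
Qed.

Lemma lift_edge_cross x y : h x y -> h (x.1, false) (y.1, true) = x.2 (+) y.2.
Proof.
case: x y => u a [v b] /=; move: (h_lift u v) => /=.
case: (g u v) => //; case: a; case: b => /=;
by case: (h (u, false) (v, false)); case: (h (u, true) (v, true));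
   case: (h (u, false) (v, true)); case: (h (u, true) (v, false)).
Qed.

Hypotheses (g_simple : simple_graph g) (g_bipartite : bipartite g)
  (h_simple : simple_graph h).

Lemma straightens_exists M : matching h M -> exists s, straightens (proj @: M) s.
Proof.
move=> mM; have [rho rhoM] := crossing_switch_exists (matching_subrel (fun _ _ _ => isT) mM).
have [c c_proper] := g_bipartite.
exists [ffun u => rho u (+) c u].
apply/forall_inP => _ /imsetP[E EM ->]; apply/forall_inP => _ /imsetP[x xE ->].
apply/forall_inP => _ /imsetP[y yE ->]; apply/implyP => xy1.
have xy : x != y by apply: contraNneq xy1 => ->.
have hxy := edge_rel h_simple.1 (matching_edge mM EM) xE yE xy.
have := rhoM E EM x y xE yE xy; have := c_proper _ _ (lift_edge_proj hxy).
rewrite !ffunE (lift_edge_cross hxy) /level.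
by case: (rho x.1); case: (rho y.1); case: (c x.1); case: (c y.1); case: (x.2); case: (y.2).
Qed.

Lemma straightener_spec M : matching h M -> straightens (proj @: M) (straightener M).
Proof.
rewrite /straightener; case: pickP => [s //|noS] /straightens_exists[s].
by rewrite noS.
Qed.

Lemma straighten_matching M : matching h M -> matching (dunion g) (straighten M).
Proof.
move=> mM; have := straightener_spec mM; set s := straightener M => sM.
apply/matchingP; split.
  move=> _ /imsetP[E EM ->]; have [p [q [pq hpq defE]]] := edgeP (matching_edge mM EM).
  rewrite defE imsetU1 imset_set1; apply: edge_set2; first by rewrite (inj_eq (@switch_inj _ s)).
  have gpq := lift_edge_proj hpq.
  have pq1 : p.1 != q.1 by apply: contraTneq gpq => ->; rewrite (negbTE (g_simple.2 _)).
  have pqE : [set p.1; q.1] \in proj @: M.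
    by apply/imsetP; exists E; rewrite // defE /proj imsetU1 imset_set1.
  move: sM => /forall_inP/(_ _ pqE)/forall_inP/(_ p.1 (set21 _ _))/forall_inP/(_ q.1 (set22 _ _)).
  rewrite pq1 /= (lift_edge_cross hpq) /dunion /switch /level /= gpq /=.
  by case: (s p.1); case: (s q.1); case: (p.2); case: (q.2).
move=> _ _ /imsetP[E1 E1M ->] /imsetP[E2 E2M ->] E12.
have /(matching_disjoint mM E1M E2M) : E1 != E2 by apply: contraNneq E12 => ->.
by rewrite -!setI_eq0 -imsetI => [/eqP->|]; rewrite ?imset0 // => x y _ _; apply: switch_inj.
Qed.

Lemma mk_lift_le k : mk h k <= mk (dunion g) k.
Proof.
rewrite /mk -(card_imset _ straighten_inj); apply/subset_leq_card/subsetP => _ /imsetP[M + ->].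
by rewrite !inE => /andP[mM /eqP <-]; rewrite straighten_matching // card_straighten eqxx.
Qed.

End TwoLift.

Section DisjointUnion.

Variables (V : finType) (g : rel V).
Implicit Types (D : {set {set V * bool}}) (E : {set V * bool}) (F : {set V}).

Definition layer (l : bool) : {set V * bool} := [set w | w.2 == l].

Definition layer_proj (l : bool) D : {set {set V}} := @proj V @: [set E in D | E \subset layer l].

Definition layer_lift (l : bool) F : {set V * bool} := [set (u, l) | u in F].

Lemma layer_liftK l E : E \subset layer l -> layer_lift l (proj E) = E.
Proof.
move=> /subsetP El; rewrite /layer_lift /proj -imset_comp -[RHS]imset_id.
by apply: eq_in_imset => -[u a] /El; rewrite inE => /eqP /= ->.
Qed.

Lemma dunion_edge_layer E :
  is_edge (dunion g) E -> (E \subset layer false) || (E \subset layer true).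
Proof.
case/edgeP=> x [y [_ /andP[_ /eqP xy2] ->]].
have : [set x; y] \subset layer x.2.
  by apply/subsetP => w; rewrite !inE => /orP[]/eqP->; rewrite ?xy2.
by case: (x.2) => ->; rewrite ?orbT.
Qed.

Lemma layer_proj_matching l D :
  simple_graph g -> matching (dunion g) D -> matching g (layer_proj l D).
Proof.
move=> [_ g_irr] /matchingP[edgeD disjD]; apply/matchingP; split.
  move=> _ /imsetP[E /setIdP[ED _] ->].
  have [x [y [_ /andP[gxy _] ->]]] := edgeP (edgeD _ ED).
  rewrite /proj imsetU1 imset_set1; apply: edge_set2 => //.
  by apply: contraTneq gxy => ->; rewrite (negbTE (g_irr _)).
move=> _ _ /imsetP[E1 /setIdP[E1D E1l] ->] /imsetP[E2 /setIdP[E2D E2l] ->] E12.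
have E12' : E1 != E2 by apply: contraNneq E12 => ->.
apply/pred0P => u /=; apply/negbTE/andP => -[/imsetP[w1 w1E1 ->] /imsetP[w2 w2E2 w12]].
have /subsetP/(_ _ w1E1) := E1l; have /subsetP/(_ _ w2E2) := E2l; rewrite !inE.
case: w1 w2 w1E1 w2E2 w12 => u1 a1 [u2 a2] w1E1 w2E2 /= u12 /eqP a2l /eqP a1l.
subst.
by rewrite (disjointFr (disjD _ _ E1D E2D E12') w1E1) in w2E2.
Qed.

Lemma card_layer_proj D :
  matching (dunion g) D -> #|layer_proj false D| + #|layer_proj true D| = #|D|.
Proof.
move=> /matchingP[edgeD _].
have proj_inj l : {in [set E in D | E \subset layer l] &, injective (@proj V)}.
  by move=> E1 E2 /setIdP[_ E1l] /setIdP[_ E2l] eqE; rewrite -(layer_liftK E1l) eqE layer_liftK.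
rewrite /layer_proj (card_in_imset (proj_inj false)) (card_in_imset (proj_inj true)).
rewrite -(cardsID [set E : {set V * bool} | E \subset layer false] D).
congr (_ + _); apply: eq_card => E; rewrite !inE; first by rewrite andbC.
case ED: (E \in D); rewrite /= ?andbF ?andbT //.
have [x [y [_ _ defE]]] := edgeP (edgeD _ ED).
have layer_x l : E \subset layer l -> x.2 = l.
  by move=> /subsetP/(_ x); rewrite defE set21 inE => /(_ isT)/eqP.
case/orP: (dunion_edge_layer (edgeD _ ED)) => El; rewrite El /=.
  by apply/negP => /layer_x; rewrite (layer_x _ El).
by apply/esym/negP => /layer_x; rewrite (layer_x _ El).
Qed.

Lemma split_layersK D :
  matching (dunion g) D ->
  layer_lift false @: layer_proj false D :|: layer_lift true @: layer_proj true D = D.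
Proof.
move=> /matchingP[edgeD _]; rewrite /layer_proj -!imset_comp.
rewrite !(eq_in_imset (g := id)) ?imset_id; last 2 first.
- by move=> E /setIdP[_ El]; apply: layer_liftK.
- by move=> E /setIdP[_ El]; apply: layer_liftK.
apply/setP => E; rewrite !inE; case ED: (E \in D) => //=.
exact: dunion_edge_layer (edgeD _ ED).
Qed.

Lemma matchpoly_dunion_le (R : numDomainType) (t : R) :
  simple_graph g -> (0 <= t)%R -> (matchpoly (dunion g) t <= matchpoly g t ^+ 2)%R.
Proof.
move=> g_simple t_ge0; rewrite !matchpolyE expr2 big_distrlr pair_big_dep /=.
pose split_layers D := (layer_proj false D, layer_proj true D).
under eq_bigr => D mD do rewrite -(card_layer_proj mD) exprD.
apply: (ler_sum_inj (f := split_layers) (F := fun p => t ^+ #|p.1| * t ^+ #|p.2|)%R).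
- move=> D1 D2 mD1 mD2 [eqD0 eqD1].
  by rewrite -(split_layersK mD1) -(split_layersK mD2) eqD0 eqD1.
- by move=> D mD; rewrite /= !layer_proj_matching.
- by move=> p _; rewrite mulr_ge0 ?exprn_ge0.
Qed.

End DisjointUnion.

Theorem lemma4p2 (V : finType) (g : rel V) (h : rel (V * bool))
  (Hg : simple_graph g) (Hbip : bipartite g)
  (Hh : simple_graph h) (Hlift : two_lift g h) :
  (forall k : nat, mk h k <= mk (dunion g) k)%N /\
  (forall (R : realFieldType) (t : R), (0 <= t)%R ->
     (matchpoly h t <= matchpoly g t ^+ 2)%R).
Proof.
have mk_le k := mk_lift_le Hlift Hg Hbip Hh k.
split=> // R t t_ge0; apply: le_trans _ (matchpoly_dunion_le Hg t_ge0).
by apply: ler_sum => k _; rewrite ler_wpM2r ?exprn_ge0 ?ler_nat.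
Qed.
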